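(* Let $1\le t<k\le n$. Suppose the user, wanting file $f_i$, forms the queries as the shares $\mathbf{q}_1,\dots,\mathbf{q}_n$ of an $(n,k,t)$ linear communication efficient secret sharing scheme whose secret is $\mathbf{s}=(\mathbf{e}'_1,\dots,\mathbf{e}'_{\alpha'})$, and server $j$, when asked for a linear combination $\sum_c \lambda_c \mathbf{q}_{j,c}$ of its sub-shares, returns $\big(\sum_c\lambda_c\mathbf{q}_{j,c}\big)^T\mathbf{x}$. Then the resulting scheme is a universally robust PIR: for every $T$ with $|T|=t$ the distribution of $(\mathbf{q}_j)_{j\in T}$ does not depend on $i$, and for every $\mu$ with $k\le\mu\le n$ and every set $A$ of $\mu$ servers, the user retrieves $f_i$ from the responses of the servers in $A$ while downloading in total $\mu\alpha'/(\mu-t)$ symbols, so that the rate equals $1-t/\mu=C(t,\mu)$ simultaneously for all $\mu\in\{k,\dots,n\}$.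
   Context: Setting: $m$ files are replicated on $n$ servers over a finite field $GF(q)$. Fix a positive integer $\alpha$ divisible by $\mu-t$ for every $\mu\in\{k,\dots,n\}$... more precisely such that $\alpha'/(\mu-t)$ is an integer for all such $\mu$, where $\alpha'=(k-t)\alpha$. Each file consists of $\alpha'$ symbols and the data is $\mathbf{x}\in GF(q)^{\alpha' m}$ with $f_i=[x_i,x_{m+i},\dots,x_{(\alpha'-1)m+i}]$; $\mathbf{e}_p$ is the $p$-th standard basis vector of $GF(q)^{\alpha' m}$ and $\mathbf{e}'_j=\mathbf{e}_{(j-1)m+i}$, so $f_i=[\mathbf{e}_1'^T\mathbf{x},\dots,\mathbf{e}_{\alpha'}'^T\mathbf{x}]$. An $(n,k,t)$ linear communication efficient secret sharing scheme encodes a secret $\mathbf{s}=(s_1,\dots,s_{\alpha'})$ (vectors in $GF(q)^{\alpha' m}$) into $n$ shares, share $j$ consisting of $\alpha$ sub-shares $\mathbf{q}_{j,1},\dots,\mathbf{q}_{j,\alpha}$, each a fixed $GF(q)$-linear combination of the $s_l$ and of random vectors drawn i.i.d. uniformly and independently of the secret, such that: (perfect secrecy) the joint distribution of any $t$ shares is independent of the secret; and (communication efficiency) for every $d$ with $k\le d\le n$ and every set $A$ of $d$ shares, the secret can be recovered by a fixed linear map from $\alpha'/(d-t)$ fixed $GF(q)$-linear combinations of the sub-shares of each share in $A$, i.e. from $d\alpha'/(d-t)$ downloaded symbols in total (the optimal amount). The rate of a PIR scheme is the number of file symbols divided by the number of downloaded symbols; $C(t,\mu)=1-t/\mu$ is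 the asymptotic PIR capacity with $t$ colluding and $\mu$ responding servers. *)

From HB Require Import structures.
From mathcomp Require Import all_boot all_order all_algebra.
Set Implicit Arguments. Unset Strict Implicit. Unset Printing Implicit Defensive.
Import Order.TTheory GRing.Theory Num.Theory.
Local Open Scope ring_scope.

(* A linear secret sharing scheme over the finite field F with n shares,
   al sub-shares per share, a' secret components and R random components;
   all secret/random components are vectors in F^N (row vectors). *)
Definition share (F : finFieldType) (n al a' R N : nat)
  (A : 'I_n -> 'I_al -> 'I_a' -> F) (B : 'I_n -> 'I_al -> 'I_R -> F)
  (s : 'I_a' -> 'rV[F]_N) (u : {ffun 'I_R -> 'rV[F]_N}) (j : 'I_n) (c : 'I_al)
  : 'rV[F]_N :=
  \sum_(l < a') A j c l *: s l + \sum_(r < R) B j c r *: u r.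

(* Perfect secrecy: for u uniform on (F^N)^R, the joint distribution of any
   t shares does not depend on the secret (equality of the number of random
   draws producing each possible view). *)
Definition perfectly_secret (F : finFieldType) (n al a' R N t : nat)
  (A : 'I_n -> 'I_al -> 'I_a' -> F) (B : 'I_n -> 'I_al -> 'I_R -> F) : Prop :=
  forall T : {set 'I_n}, #|T| = t ->
  forall (s s' : 'I_a' -> 'rV[F]_N) (v : 'I_n -> 'I_al -> 'rV[F]_N),
    #|[pred u : {ffun 'I_R -> 'rV[F]_N} |
        [forall j in T, forall c, share A B s u j c == v j c]]%N|
    = #|[pred u : {ffun 'I_R -> 'rV[F]_N} |
        [forall j in T, forall c, share A B s' u j c == v j c]]%N|.

Definition comm_efficient (F : finFieldType) (n al a' R N k t : nat)
  (A : 'I_n -> 'I_al -> 'I_a' -> F) (B : 'I_n -> 'I_al -> 'I_R -> F) : Prop :=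
  forall d, (k <= d <= n)%N -> forall S : {set 'I_n}, #|S| = d ->
  exists (lam : 'I_n -> 'I_(a' %/ (d - t)) -> 'I_al -> F)
         (D : 'I_a' -> 'I_n -> 'I_(a' %/ (d - t)) -> F),
    forall (s : 'I_a' -> 'rV[F]_N) (u : {ffun 'I_R -> 'rV[F]_N}) (l : 'I_a'),
      s l = \sum_(j in S) \sum_(p < a' %/ (d - t))
               D l j p *: (\sum_(c < al) lam j p c *: share A B s u j c).

Definition lin_CESSS (F : finFieldType) (n k t al a' R N : nat)
  (A : 'I_n -> 'I_al -> 'I_a' -> F) (B : 'I_n -> 'I_al -> 'I_R -> F) : Prop :=
  perfectly_secret N t A B /\ comm_efficient N k t A B.

(* e'_l for file i: standard basis vector e_{l*m+i} of F^(a' m) (0-indexed) *)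
Definition eprime (F : finFieldType) (a' m : nat) (i : 'I_m) (l : 'I_a')
  : 'rV[F]_(a' * m) := delta_mx 0 (mxvec_index l i).

Definition query (F : finFieldType) (n al a' R m : nat)
  (A : 'I_n -> 'I_al -> 'I_a' -> F) (B : 'I_n -> 'I_al -> 'I_R -> F)
  (i : 'I_m) (u : {ffun 'I_R -> 'rV[F]_(a' * m)}) (j : 'I_n) (c : 'I_al)
  : 'rV[F]_(a' * m) :=
  share A B (@eprime F a' m i) u j c.

Definition response (F : finFieldType) (N : nat) (x v : 'rV[F]_N) : F :=
  (v *m x^T) 0 0.

From HB Require Import structures.
From mathcomp Require Import all_boot all_order all_algebra.
From mathcomp Require Import ring.
Import Order.TTheory GRing.Theory Num.Theory.

(* Privacy is inherited verbatim from perfect secrecy, since a query is a share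
   of the secret (e'_1, ..., e'_a'). Robustness: the server answers v^T x are
   linear in v, so applying the recovery map of the secret sharing scheme to
   the answers yields e'_l^T x = x_{(l-1)m+i}, i.e. the l-th symbol of f_i.
   Downloading a'/(mu-t) symbols from each of mu servers gives rate
   a' / (mu a'/(mu-t)) = 1 - t/mu. *)

Section Response.
Local Open Scope ring_scope.
Variables (F : finFieldType) (N : nat) (x : 'rV[F]_N).

Lemma response_sum (I : Type) (r : seq I) (P : pred I) (f : I -> 'rV[F]_N) :
  response x (\sum_(i <- r | P i) f i) = \sum_(i <- r | P i) response x (f i).
Proof. by rewrite /response mulmx_suml summxE. Qed.

Lemma response_scale (a : F) (v : 'rV[F]_N) :
  response x (a *: v) = a * response x v.
Proof. by rewrite /response -scalemxAl mxE. Qed.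

Lemma response_recover (I J : finType) (S : {pred I}) (D : I -> J -> F)
    (w : I -> J -> 'rV[F]_N) (y : 'rV[F]_N) :
  y = \sum_(j in S) \sum_p D j p *: w j p ->
  response x y = \sum_(j in S) \sum_p D j p * response x (w j p).
Proof.
move->; rewrite response_sum; apply: eq_bigr => j _.
by rewrite response_sum; apply: eq_bigr => p _; rewrite response_scale.
Qed.

End Response.

Lemma response_eprime (F : finFieldType) (a' m : nat) (i : 'I_m) (l : 'I_a')
    (x : 'rV[F]_(a' * m)) :
  response x (@eprime F a' m i l) = x ord0 (mxvec_index l i).
Proof.
rewrite /response /eprime mxE (bigD1 (mxvec_index l i)) //= big1.
  by rewrite !mxE !eqxx mul1r addr0 (ord1 ord0).
by move=> j /negbTE hj; rewrite !mxE hj andbF mul0r.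
Qed.

Section Rate.
Local Open Scope ring_scope.
Variables (R : numFieldType) (a d t : nat).
Hypotheses (lt_td : (t < d)%N) (dvd_a : (d - t %| a)%N).

Lemma download_size :
  (d * (a %/ (d - t)))%:R = d%:R * a%:R / (d - t)%:R :> R.
Proof. by rewrite natrM natf_div // mulrA. Qed.

Lemma rate_eq_capacity : (0 < a)%N ->
  a%:R / (d * (a %/ (d - t)))%:R = 1 - t%:R / d%:R :> R.
Proof.
move=> a_gt0; have le_td := ltnW lt_td.
have d_neq0 : d%:R != 0 :> R by rewrite pnatr_eq0 -lt0n (leq_ltn_trans _ lt_td).
have a_neq0 : a%:R != 0 :> R by rewrite pnatr_eq0 -lt0n.
have dt_neq0 : d%:R - t%:R != 0 :> R by rewrite -natrB // pnatr_eq0 subn_eq0 -ltnNge.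
by rewrite download_size natrB //; field; rewrite d_neq0 a_neq0 dt_neq0.
Qed.

End Rate.

Theorem proposition2 (F : finFieldType) (m n k t al R : nat)
  (A : 'I_n -> 'I_al -> 'I_((k - t) * al) -> F)
  (B : 'I_n -> 'I_al -> 'I_R -> F) :
  (1 <= t)%N -> (t < k)%N -> (k <= n)%N -> (0 < al)%N ->
  (forall mu, (k <= mu <= n)%N -> ((mu - t) %| (k - t) * al)) ->
  lin_CESSS k t ((k - t) * al * m) A B ->
  (forall T : {set 'I_n}, #|T| = t ->
   forall (i i' : 'I_m) (v : 'I_n -> 'I_al -> 'rV[F]_((k - t) * al * m)),
     #|[pred u : {ffun 'I_R -> 'rV[F]_((k - t) * al * m)} |
         [forall j in T, forall c, query A B i u j c == v j c]]%N|
     = #|[pred u : {ffun 'I_R -> 'rV[F]_((k - t) * al * m)} |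
         [forall j in T, forall c, query A B i' u j c == v j c]]%N|)
  /\
  (forall mu, (k <= mu <= n)%N -> forall S : {set 'I_n}, #|S| = mu ->
   exists (lam : 'I_n -> 'I_((k - t) * al %/ (mu - t)) -> 'I_al -> F)
          (D : 'I_((k - t) * al) -> 'I_n -> 'I_((k - t) * al %/ (mu - t)) -> F),
     (forall (i : 'I_m) (x : 'rV[F]_((k - t) * al * m))
             (u : {ffun 'I_R -> 'rV[F]_((k - t) * al * m)}) (l : 'I_((k - t) * al)),
        x ord0 (mxvec_index l i)
        = (\sum_(j in S) \sum_(p < (k - t) * al %/ (mu - t))
            D l j p * response x (\sum_(c < al) lam j p c *: query A B i u j c))%R)
     /\ ((#|S| * ((k - t) * al %/ (mu - t)))%:R%R : rat)
          = (mu%:R * ((k - t) * al)%:R / (mu - t)%:R)%R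
     /\ ((((k - t) * al)%:R / (#|S| * ((k - t) * al %/ (mu - t)))%:R)%R : rat)
          = (1 - t%:R / mu%:R)%R).
Proof.
move=> _ lt_tk _ al_gt0 dvd_mu [secret efficient]; split.
  by move=> T card_T i i' v; apply: secret.
move=> mu mu_range S card_S.
have lt_tmu : (t < mu)%N by case/andP: mu_range => /(leq_trans lt_tk).
have [lam [D recover]] := efficient mu mu_range S card_S.
exists lam, D; split; last split; rewrite ?card_S.
- move=> i x u l; rewrite -response_eprime.
  exact/response_recover/recover.
- exact/download_size/dvd_mu.
- apply: rate_eq_capacity => //; first exact: dvd_mu.
  by rewrite muln_gt0 subn_gt0 lt_tk.
Qed.
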